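(* Let $\{X_t\}_{t\in\mathbb N^+}$ be a real-valued process adapted to a filtration $\{\mathcal F_t\}_{t\in\mathbb N}$ with $\mathcal F_0$ trivial, such that for all $t\in\mathbb N^+$, $\mathbb E[X_t\mid\mathcal F_{t-1}]=\mu$ (a constant) and $\mathbb E[(X_t-\mu)^2\mid\mathcal F_{t-1}]\le\sigma^2$. Let $\{\lambda_t\}_{t\in\mathbb N^+}$ be any predictable process and let $\phi$ be a Catoni-type influence function. Then the processes $$M^{\mathsf C}_t=\prod_{i=1}^t\exp\left(\phi(\lambda_i(X_i-\mu))-\lambda_i^2\sigma^2/2\right),\qquad N^{\mathsf C}_t=\prod_{i=1}^t\exp\left(-\phi(\lambda_i(X_i-\mu))-\lambda_i^2\sigma^2/2\right)$$ (with $M^{\mathsf C}_0=N^{\mathsf C}_0=1$) are nonnegative supermartingales with respect to $\{\mathcal F_t\}$.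
   Context: A process $\{\lambda_t\}$ is predictable if each $\lambda_t$ is $\mathcal F_{t-1}$-measurable. A function $\phi:\mathbb R\to\mathbb R$ is a Catoni-type influence function if it is increasing and $-\log(1-x+x^2/2)\le\phi(x)\le\log(1+x+x^2/2)$ for all $x\in\mathbb R$. *)

From HB Require Import structures.
From mathcomp Require Import all_boot all_order all_algebra.
From mathcomp Require Import all_classical all_reals all_analysis.
Set Implicit Arguments. Unset Strict Implicit. Unset Printing Implicit Defensive.
Import Order.TTheory GRing.Theory Num.Theory.
Local Open Scope classical_set_scope.
Local Open Scope ring_scope.

Definition sub_sigma d (T : measurableType d) (G : set (set T)) :=
  sigma_algebra setT G /\ G `<=` measurable.

Definition G_measurable d (T : measurableType d) (R : realType)
  (G : set (set T)) (f : T -> R) :=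
  forall B : set R, measurable B -> G (f @^-1` B).

Definition filtration d (T : measurableType d) (F : nat -> set (set T)) :=
  (forall n, sub_sigma (F n)) /\ (forall n, F n `<=` F n.+1).

Definition adapted d (T : measurableType d) (R : realType)
  (F : nat -> set (set T)) (X : nat -> T -> R) :=
  forall n, G_measurable (F n) (X n).

Definition cond_exp_version d (T : measurableType d) (R : realType)
  (P : probability T R) (G : set (set T)) (X Y : T -> R) :=
  [/\ P.-integrable setT (EFin \o X),
      G_measurable G Y,
      P.-integrable setT (EFin \o Y) &
      forall A, G A -> (\int[P]_(x in A) (X x)%:E = \int[P]_(x in A) (Y x)%:E)%E].

Definition supermartingale d (T : measurableType d) (R : realType)
  (P : probability T R) (F : nat -> set (set T)) (M : nat -> T -> R) :=
  [/\ adapted F M,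
      forall t, P.-integrable setT (EFin \o M t) &
      forall t (Y : T -> R), cond_exp_version P (F t) (M t.+1) Y ->
        {ae P, forall x, Y x <= M t x}].

Definition catoni_type (R : realType) (phi : R -> R) :=
  {homo phi : x y / x <= y} /\
  forall x, - ln (1 - x + x ^+ 2 / 2) <= phi x /\ phi x <= ln (1 + x + x ^+ 2 / 2).

Definition catoniM (R : realType) T (phi : R -> R) (lam X : nat -> T -> R)
  (mu sigma : R) (t : nat) (x : T) : R :=
  \prod_(i < t) expR (phi (lam i.+1 x * (X i.+1 x - mu))
                      - lam i.+1 x ^+ 2 * sigma ^+ 2 / 2).

Definition catoniN (R : realType) T (phi : R -> R) (lam X : nat -> T -> R)
  (mu sigma : R) (t : nat) (x : T) : R :=
  \prod_(i < t) expR (- phi (lam i.+1 x * (X i.+1 x - mu))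
                      - lam i.+1 x ^+ 2 * sigma ^+ 2 / 2).

(* With W := 1_A M_t for A in F_t, D := X_{t+1} - mu and v := lam_{t+1} D, one step
   multiplies M_t by exp(g v - a), a := lam^2 sigma^2 / 2, and the Catoni bound gives
   exp(g v) <= 1 + v + v^2/2.  Given F_t, v has mean zero and v^2 has mean at most
   lam^2 sigma^2, hence E[1_A M_{t+1}] <= E[W exp(-a) (1 + a)] <= E[1_A M_t].
   Conditional expectations are only known through their integrals over F_t-sets; these
   extend to integrals against nonnegative F_t-measurable weights by simple-function
   approximation and monotone convergence.  As W exp(-a) v need not be integrable, it is
   handled through its positive and negative parts, whose integrals agree and are finite
   because |v| <= 1 + v^2/2.  N^C is M^C for the influence function v |-> -phi(-v) and the
   predictable process -lam. *)

From HB Require Import structures.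
From mathcomp Require Import all_boot all_order all_algebra.
From mathcomp Require Import all_classical all_reals all_analysis.
From mathcomp Require Import measurable_realfun ring lra.
Import Order.TTheory GRing.Theory Num.Theory.
Local Open Scope classical_set_scope.
Local Open Scope ring_scope.

Section real_inequalities.
Context {R : realType}.

Lemma funrposM T (f g : T -> R) : (f \* g)^\+ = f^\+ \* g^\+ \+ f^\- \* g^\-.
Proof. by apply/funext => x; rewrite /funrpos /funrneg /=; do 5 case: ltrP => ?; nra. Qed.

Lemma funrnegM T (f g : T -> R) : (f \* g)^\- = f^\+ \* g^\- \+ f^\- \* g^\+.
Proof. by apply/funext => x; rewrite /funrpos /funrneg /=; do 5 case: ltrP => ?; nra. Qed.

Lemma normr_le_1Dsqr_half (w : R) : `|w| <= 1 + w ^+ 2 / 2.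
Proof. rewrite -real_normK ?num_real //; have := sqr_ge0 (`|w| - 1); nra. Qed.

Lemma expRN_mul1D_le1 (a : R) : expR (- a) * (1 + a) <= 1.
Proof. by rewrite expRN mulrC ler_pdivrMr ?expR_gt0 // mul1r expR_ge1Dx. Qed.

Lemma ler_mul_1Dquad_posneg (z e v : R) : 0 <= z -> e <= 1 + v + v ^+ 2 / 2 ->
  z * e + z * Num.max (- v) 0 <= z + z * Num.max v 0 + z * (v ^+ 2 / 2).
Proof. by move=> z0 /(ler_wpM2l z0); rewrite /Num.max; do 2 case: ltrP => ?; nra. Qed.

Lemma catoni_type_expR_le {phi : R -> R} : catoni_type phi ->
  (forall v, expR (phi v) <= 1 + v + v ^+ 2 / 2) /\
  (forall v, expR (- phi (- v)) <= 1 + v + v ^+ 2 / 2).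
Proof.
move=> [_ phi_ln]; have quad_gt0 v : 0 < 1 + v + v ^+ 2 / 2 :> R.
  by have := sqr_ge0 (v + 1); nra.
split => v; rewrite -[leRHS]lnK ?posrE // ler_expR.
- exact: (phi_ln v).2.
- by rewrite lerNl; have := (phi_ln (- v)).1; rewrite opprK sqrrN.
Qed.

End real_inequalities.

Section ge0_integral_EFin.
Context {d} {T : measurableType d} {R : realType} (mu : {measure set T -> \bar R}).
Implicit Types f h : T -> R.

Lemma integral_mkcond_indic (A : set T) f :
  (\int[mu]_(x in A) (f x)%:E = \int[mu]_x (\1_A x * f x)%:E)%E.
Proof.
rewrite integral_mkcond; apply: eq_integral => x _.
by rewrite patchE indicE; case: (x \in A); rewrite ?mul1r ?mul0r.
Qed.

Lemma ge0_integralD_EFin f h : (forall x, 0 <= f x) -> (forall x, 0 <= h x) ->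
  measurable_fun setT f -> measurable_fun setT h ->
  (\int[mu]_x (f x + h x)%:E = \int[mu]_x (f x)%:E + \int[mu]_x (h x)%:E)%E.
Proof.
move=> f0 h0 mf mh; under eq_integral do rewrite EFinD.
apply: ge0_integralD => //.
- by move=> x ?; rewrite lee_fin.
- exact/measurable_EFinP.
- by move=> x ?; rewrite lee_fin.
- exact/measurable_EFinP.
Qed.

Lemma ge0_le_integral_EFin f h : (forall x, 0 <= f x) ->
  measurable_fun setT f -> measurable_fun setT h -> (forall x, f x <= h x) ->
  (\int[mu]_x (f x)%:E <= \int[mu]_x (h x)%:E)%E.
Proof.
move=> f0 mf mh fh; apply: ge0_le_integral => //.
- by move=> x ?; rewrite lee_fin.
- exact/measurable_EFinP.
- exact/measurable_EFinP.
- by move=> x ?; rewrite lee_fin.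
Qed.

End ge0_integral_EFin.

Import HBNNSimple.

Section sub_sigma_algebra.
Context {R : realType} {d} {T : measurableType d} {G : set (set T)}.
Hypothesis sG : sub_sigma G.
Local Notation TG := (g_sigma_algebraType G).

Lemma sub_measurableE (A : set T) : (measurable : set (set TG)) A = G A.
Proof. by rewrite measurable_g_measurableTypeE //; case: sG. Qed.

Lemma G_measurableP (f : T -> R) :
  G_measurable G f <-> measurable_fun [set: TG] (f : TG -> R).
Proof.
split => [fG _ B mB | mf B mB]; first by rewrite setTI sub_measurableE; exact: fG.
by rewrite -sub_measurableE -[X in measurable X]setTI; exact: mf.
Qed.

Lemma sub_measurable_fun (f : T -> R) :
  measurable_fun [set: TG] (f : TG -> R) -> measurable_fun [set: T] f.
Proof. by move=> mf _ B mB; apply: sG.2; rewrite -sub_measurableE; exact: mf. Qed.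

Lemma G_measurable_fun (f : T -> R) : G_measurable G f -> measurable_fun [set: T] f.
Proof. by move=> /G_measurableP; exact: sub_measurable_fun. Qed.

Variable mu : {measure set T -> \bar R}.

Lemma ae_le_of_sub_integral_le (Y Z : T -> R) :
  G_measurable G Y -> G_measurable G Z ->
  mu.-integrable setT (EFin \o Y) -> mu.-integrable setT (EFin \o Z) ->
  (forall A, G A -> (\int[mu]_(x in A) (Y x)%:E <= \int[mu]_(x in A) (Z x)%:E)%E) ->
  {ae mu, forall x, Y x <= Z x}.
Proof.
move=> /G_measurableP mY /G_measurableP mZ iY iZ YZ.
pose A := [set x | Z x < Y x].
have GA : G A.
  rewrite -sub_measurableE.
  have := measurable_funB mY mZ measurableT (measurable_itv `]0%R, +oo[).
  rewrite setTI (_ : _ @^-1` _ = A) //; apply/seteqP; split => x /=;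
    by rewrite in_itv /= andbT subr_gt0.
have mA : measurable A := sG.2 _ GA.
have mYZ : measurable_fun A (fun x => (Y x - Z x)%:E).
  have := measurable_funB (sub_measurable_fun _ mY) (sub_measurable_fun _ mZ).
  by move=> mYZ; apply/measurable_EFinP; exact: measurable_funTS.
have int0 : (\int[mu]_(x in A) (Y x - Z x)%:E = 0)%E.
  apply/eqP; rewrite eq_le; apply/andP; split.
    rewrite (integralB_EFin mA); try exact: integrableS iY; try exact: integrableS iZ.
    by rewrite sube_le0; exact: YZ.
  by apply: integral_ge0 => x Ax; rewrite lee_fin subr_ge0 ltW.
have : (\int[mu]_(x in A) `|(Y x - Z x)%:E| = 0)%E.
  rewrite -int0; apply: eq_integral => x /set_mem Ax.
  by rewrite gee0_abs // lee_fin subr_ge0 ltW.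
move/(ae_eq_integral_abs mu mA mYZ); apply: filterS => x YZx.
rewrite leNgt; apply/negP => ZY.
by have := YZx ZY; move=> /= [] /eqP; rewrite subr_eq0 gt_eqF.
Qed.

Section integral_mul_le.
Variables W1 W2 : T -> R.
Hypotheses (W10 : forall x, 0 <= W1 x) (W20 : forall x, 0 <= W2 x).
Hypotheses (mW1 : measurable_fun setT W1) (mW2 : measurable_fun setT W2).
Hypothesis W12 : forall A, G A ->
  (\int[mu]_(x in A) (W1 x)%:E <= \int[mu]_(x in A) (W2 x)%:E)%E.

Lemma ge0_le_integral_nnsfun_mul (s : {nnsfun TG >-> R}) :
  (\int[mu]_x (s x * W1 x)%:E <= \int[mu]_x (s x * W2 x)%:E)%E.
Proof.
have fin_s : finite_set (range s) by exact: fimfunP.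
have Gs y : G (s @^-1` [set y]) by rewrite -sub_measurableE; exact: measurable_funPTI.
have sE (W : T -> R) : (forall x, 0 <= W x) -> measurable_fun setT W ->
    (\int[mu]_x (s x * W x)%:E =
     \sum_(y \in range s) y%:E * \int[mu]_(x in s @^-1` [set y]) (W x)%:E)%E.
  move=> W0 mW.
  have sWE x : ((s x * W x)%:E =
      \sum_(y \in range s) (y * \1_(s @^-1` [set y]) x * W x)%:E)%E.
    by rewrite fsumEFin // {1}fimfunE mulr_fsuml.
  under eq_integral do rewrite sWE.
  rewrite ge0_integral_fsum //; first last.
  - move=> y x _; rewrite lee_fin mulr_ge0 // indicE.
    by case: (boolP (x \in _)) => [/set_mem <-|_]; rewrite ?mulr1 ?mulr0.
  - move=> y; apply/measurable_EFinP; apply: measurable_funM => //.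
    by apply: measurable_funM => //; apply: measurable_indic; exact: sG.2.
  apply: eq_fsbigr => y /set_mem -[x _ <-].
  under eq_integral do rewrite -mulrA EFinM.
  rewrite ge0_integralZl_EFin //; first last.
  - apply/measurable_EFinP; apply: measurable_funM => //.
    by apply: measurable_indic; exact: sG.2.
  - by move=> z ?; rewrite lee_fin mulr_ge0 // indicE; case: (_ \in _).
  by rewrite integral_mkcond_indic.
rewrite !sE //; apply: lee_fsum => // y -[x _ <-].
by apply: lee_wpmul2l; [rewrite lee_fin | exact: W12].
Qed.

Lemma ge0_le_integral_sub_mul (H : T -> R) : (forall x, 0 <= H x) ->
  measurable_fun [set: TG] (H : TG -> R) ->
  (\int[mu]_x (H x * W1 x)%:E <= \int[mu]_x (H x * W2 x)%:E)%E.
Proof.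
move=> H0 mH; have mEH : measurable_fun [set: TG] ((fun x => (H x)%:E) : TG -> \bar R).
  exact/measurable_EFinP.
pose h := nnsfun_approx (@measurableT _ TG) mEH.
have mh n : measurable_fun [set: T] (h n : T -> R).
  exact/sub_measurable_fun/measurable_funPT.
have h_nd (W : T -> R) x : 0 <= W x ->
    {homo (fun n => (h n x * W x)%:E) : m n / (m <= n)%N >-> (m <= n)%E}.
  move=> W0 m n mn; rewrite lee_fin ler_wpM2r //.
  by have /lefP := nd_nnsfun_approx (@measurableT _ TG) mEH mn; apply.
have hW_cvg (W : T -> R) : (forall x, 0 <= W x) -> measurable_fun setT W ->
    (\int[mu]_x (H x * W x)%:E = limn (fun n => \int[mu]_x (h n x * W x)%:E))%E.
  move=> W0 mW; rewrite -monotone_convergence //.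
  - apply: eq_integral => x _; apply/esym/cvg_lim => //.
    under eq_fun do rewrite EFinM; rewrite EFinM; apply: cvgeZr => //.
    by apply: (cvg_nnsfun_approx (@measurableT _ TG) mEH) => // y _; rewrite lee_fin.
  - by move=> n; apply/measurable_EFinP; exact: measurable_funM.
  - by move=> n x _; rewrite lee_fin mulr_ge0.
  - by move=> x _; exact: h_nd.
have int_cvg (W : T -> R) : (forall x, 0 <= W x) -> measurable_fun setT W ->
    cvgn (fun n => \int[mu]_x (h n x * W x)%:E)%E.
  move=> W0 mW; apply: ereal_nondecreasing_is_cvgn => m n mn.
  apply: ge0_le_integral_EFin; [by move=> x; rewrite mulr_ge0|exact: measurable_funM..|].
  by move=> x; have := h_nd _ x (W0 x) _ _ mn; rewrite lee_fin.
rewrite !hW_cvg //; apply: lee_lim; [exact: int_cvg..|].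
by apply: nearW => n; exact: ge0_le_integral_nnsfun_mul.
Qed.

End integral_mul_le.

End sub_sigma_algebra.

Section cond_exp_version.
Context {R : realType} {d} {T : measurableType d} {G : set (set T)}.
Hypothesis sG : sub_sigma G.
Context {P : probability T R}.

Lemma cond_exp_cst_integral_funrpos {X : T -> R} {mu : R} :
  cond_exp_version P G X (fun=> mu) -> forall A, G A ->
  (\int[P]_(x in A) ((X \- cst mu)^\+ x)%:E = \int[P]_(x in A) ((X \- cst mu)^\- x)%:E)%E.
Proof.
move=> [iX _ _ XA] A GA; have mA := sG.2 _ GA.
have imu : P.-integrable A (EFin \o cst mu) by exact: finite_measure_integrable_cst.
have iD : P.-integrable A (EFin \o (X \- cst mu)).
  rewrite (_ : _ \o _ = (EFin \o X) \- (EFin \o cst mu))%E; last exact/funext.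
  by apply: integrableB => //; exact: integrableS iX.
have D0 : (\int[P]_(x in A) ((X \- cst mu) x)%:E = 0)%E.
  by rewrite integralB_EFin //; [rewrite XA // subee // integrable_fin_num | exact: integrableS iX].
have iDn := integrable_funrneg mA iD.
move: D0; rewrite integralE funerpos funerneg => D0.
by rewrite -[LHS](subeK _ (integrable_fin_num mA iDn)) D0 add0e.
Qed.

Lemma cond_exp_integral_le_cst {f Y : T -> R} {c : R} : 0 <= c ->
  cond_exp_version P G f Y -> {ae P, forall x, Y x <= c} -> forall A, G A ->
  (\int[P]_(x in A) (f x)%:E <= \int[P]_(x in A) c%:E)%E.
Proof.
move=> c0 [_ /(G_measurableP sG)/(sub_measurable_fun sG) mY iY fY] Yc A GA.
have mA := sG.2 _ GA; have iYA := integrableS measurableT mA (subsetT _) iY.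
rewrite fY // integralE funerpos funerneg.
apply: le_trans (_ : \int[P]_(x in A) ((Y^\+ x)%:E) <= _)%E.
  rewrite lee_subel_addr; first by apply: leeDl; apply: integral_ge0 => x _; rewrite lee_fin funrneg_ge0.
  exact: integrable_fin_num (integrable_funrpos mA iYA).
apply: ae_ge0_le_integral => //.
- by move=> x _; rewrite lee_fin funrpos_ge0.
- by apply/measurable_EFinP/measurable_funrpos; exact: measurable_funTS.
- by apply: filterS Yc => x Yxc _; rewrite lee_fin ge_max Yxc.
Qed.

End cond_exp_version.

Section catoni_step.
Context {R : realType} {d} {T : measurableType d} {G : set (set T)}.
Hypothesis sG : sub_sigma G.
Local Notation TG := (g_sigma_algebraType G).
Variable mu : {measure set T -> \bar R}.
Variables (D : T -> R) (sigma : R).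
Hypothesis mD : measurable_fun setT D.
Hypothesis D_centered : forall A, G A ->
  (\int[mu]_(x in A) (D^\+ x)%:E = \int[mu]_(x in A) (D^\- x)%:E)%E.
Hypothesis D_sqr_le : forall A, G A ->
  (\int[mu]_(x in A) (D x ^+ 2)%:E <= \int[mu]_(x in A) (sigma ^+ 2)%:E)%E.

Lemma integral_mul_funrpos_eq (H : T -> R) : (forall x, 0 <= H x) ->
  measurable_fun [set: TG] (H : TG -> R) ->
  (\int[mu]_x (H x * D^\+ x)%:E = \int[mu]_x (H x * D^\- x)%:E)%E.
Proof.
move=> H0 mH; have mDp := measurable_funrpos mD; have mDn := measurable_funrneg mD.
apply/le_anti/andP; split; apply: (ge0_le_integral_sub_mul sG) => //;
  by [exact: funrpos_ge0 | exact: funrneg_ge0 | move=> A GA; rewrite D_centered].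
Qed.

Lemma integral_mul_funrposM_eq (Z l : T -> R) : (forall x, 0 <= Z x) ->
  measurable_fun [set: TG] (Z : TG -> R) -> measurable_fun [set: TG] (l : TG -> R) ->
  (\int[mu]_x (Z x * (l \* D)^\+ x)%:E = \int[mu]_x (Z x * (l \* D)^\- x)%:E)%E.
Proof.
move=> Z0 mZ ml.
have mZlp : measurable_fun [set: TG] ((Z \* l^\+) : TG -> R).
  exact: measurable_funM mZ (measurable_funrpos ml).
have mZln : measurable_fun [set: TG] ((Z \* l^\-) : TG -> R).
  exact: measurable_funM mZ (measurable_funrneg ml).
have mDp := measurable_funrpos mD; have mDn := measurable_funrneg mD.
have Zlp0 x : 0 <= (Z \* l^\+) x by rewrite /= mulr_ge0 ?funrpos_ge0.
have Zln0 x : 0 <= (Z \* l^\-) x by rewrite /= mulr_ge0 ?funrneg_ge0.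
rewrite funrposM funrnegM.
under eq_integral do rewrite /= mulrDr !mulrA.
under [in RHS]eq_integral do rewrite /= mulrDr !mulrA.
rewrite !ge0_integralD_EFin //.
all: try by move=> x; rewrite mulr_ge0 ?funrpos_ge0 ?funrneg_ge0 ?Zlp0 ?Zln0.
all: try (apply: measurable_funM; last by [exact: measurable_funrpos | exact: measurable_funrneg]).
all: try (apply: (sub_measurable_fun sG); by [exact: mZlp | exact: mZln]).
by rewrite (integral_mul_funrpos_eq _ Zlp0 mZlp) (integral_mul_funrpos_eq _ Zln0 mZln).
Qed.

Variables (g : R -> R) (l W : T -> R).
Hypothesis mg : measurable_fun setT g.
Hypothesis expR_g_le : forall v, expR (g v) <= 1 + v + v ^+ 2 / 2.
Hypotheses (W0 : forall x, 0 <= W x) (mW : measurable_fun [set: TG] (W : TG -> R)).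
Hypothesis ml : measurable_fun [set: TG] (l : TG -> R).

Let a x := l x ^+ 2 * sigma ^+ 2 / 2.
Let Z x := W x * expR (- a x).
Let q x := Z x * (l x ^+ 2 / 2).
Let v := l \* D.

Let Z0 x : 0 <= Z x. Proof. by rewrite mulr_ge0 ?expR_ge0. Qed.
Let q0 x : 0 <= q x. Proof. by rewrite mulr_ge0 // divr_ge0 ?sqr_ge0. Qed.

Let mZG : measurable_fun [set: TG] (Z : TG -> R).
Proof.
apply: measurable_funM => //; apply: measurableT_comp => //; apply: measurable_funN.
by apply: measurable_funM => //; apply: measurable_funM => //; exact: measurable_funX.
Qed.

Let mZ : measurable_fun setT Z. Proof. exact: sub_measurable_fun mZG. Qed.

Let mq : measurable_fun setT q.
Proof.
apply: (sub_measurable_fun sG); apply: measurable_funM => //.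
by apply: measurable_funM => //; exact: measurable_funX.
Qed.

Let mv : measurable_fun setT v.
Proof. exact: measurable_funM (sub_measurable_fun sG _ ml) mD. Qed.

Let qD2E x : q x * D x ^+ 2 = Z x * (v x ^+ 2 / 2).
Proof. by rewrite /q /v /= exprMn; ring. Qed.

Lemma catoni_integral_expansion :
  (\int[mu]_x (Z x * expR (g (v x)))%:E + \int[mu]_x (Z x * v^\- x)%:E
    <= \int[mu]_x (Z x)%:E + \int[mu]_x (Z x * v^\+ x)%:E
       + \int[mu]_x (q x * D x ^+ 2)%:E)%E.
Proof.
have mZe : measurable_fun setT (fun x => Z x * expR (g (v x))).
  by apply: measurable_funM => //; apply: measurableT_comp => //; exact: measurableT_comp.
have mZvp : measurable_fun setT (fun x => Z x * v^\+ x).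
  exact: measurable_funM mZ (measurable_funrpos mv).
have mZvn : measurable_fun setT (fun x => Z x * v^\- x).
  exact: measurable_funM mZ (measurable_funrneg mv).
have mqD2 : measurable_fun setT (fun x => q x * D x ^+ 2).
  exact: measurable_funM mq (measurable_funX 2 mD).
have Ze0 x : 0 <= Z x * expR (g (v x)) by rewrite mulr_ge0 ?expR_ge0.
have Zvp0 x : 0 <= Z x * v^\+ x by rewrite mulr_ge0 ?funrpos_ge0.
have Zvn0 x : 0 <= Z x * v^\- x by rewrite mulr_ge0 ?funrneg_ge0.
have qD20 x : 0 <= q x * D x ^+ 2 by rewrite mulr_ge0 ?sqr_ge0.
rewrite -!ge0_integralD_EFin //;
  try by [move=> x; rewrite addr_ge0 ?Z0 ?Zvp0 | exact: measurable_funD].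
apply: ge0_le_integral_EFin.
- by move=> x; rewrite addr_ge0 ?Ze0 ?Zvn0.
- exact: measurable_funD.
- by apply: measurable_funD => //; exact: measurable_funD.
by move=> x; rewrite qD2E; exact: ler_mul_1Dquad_posneg (Z0 x) (expR_g_le _).
Qed.

Lemma catoni_integral_quadratic_le :
  (\int[mu]_x (Z x)%:E + \int[mu]_x (q x * D x ^+ 2)%:E <= \int[mu]_x (W x)%:E)%E.
Proof.
have variance : (\int[mu]_x (q x * D x ^+ 2)%:E <= \int[mu]_x (q x * sigma ^+ 2)%:E)%E.
  apply: (ge0_le_integral_sub_mul sG) => //.
  - by move=> x; exact: sqr_ge0.
  - by move=> _; exact: sqr_ge0.
  - exact: measurable_funX.
  - by apply: measurable_funM => //; apply: measurable_funM => //; exact: measurable_funX.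
apply: le_trans (leeD (lexx _) variance) _.
rewrite -ge0_integralD_EFin //; last 2 first.
- by move=> x; rewrite mulr_ge0 ?sqr_ge0.
- exact: measurable_funM.
apply: ge0_le_integral_EFin => //.
- by move=> x; rewrite addr_ge0 // mulr_ge0 ?sqr_ge0.
- by apply: measurable_funD => //; exact: measurable_funM.
- exact: sub_measurable_fun mW.
move=> x; have -> : Z x + q x * sigma ^+ 2 = W x * (expR (- a x) * (1 + a x)).
  by rewrite /q /Z /a; ring.
exact: ler_piMr (W0 x) (expRN_mul1D_le1 _).
Qed.

Lemma catoni_integral_funrneg_le :
  (\int[mu]_x (Z x * v^\- x)%:E
    <= \int[mu]_x (Z x)%:E + \int[mu]_x (q x * D x ^+ 2)%:E)%E.
Proof.
have qD20 x : 0 <= q x * D x ^+ 2 by rewrite mulr_ge0 ?sqr_ge0.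
rewrite -ge0_integralD_EFin //; last exact: measurable_funM mq (measurable_funX 2 mD).
apply: ge0_le_integral_EFin.
- by move=> x; rewrite mulr_ge0 ?funrneg_ge0.
- exact: measurable_funM mZ (measurable_funrneg mv).
- by apply: measurable_funD => //; exact: measurable_funM mq (measurable_funX 2 mD).
move=> x; have vn_le : v^\- x <= 1 + v x ^+ 2 / 2.
  apply: le_trans (normr_le_1Dsqr_half (v x)).
  by rewrite ge_max normr_ge0 andbT -normrN ler_norm.
by rewrite qD2E -[X in X + _]mulr1 -mulrDr ler_wpM2l.
Qed.

Lemma catoni_step_integral_le : (\int[mu]_x (W x)%:E < +oo)%E ->
  (\int[mu]_x (W x * expR (g (l x * D x) - l x ^+ 2 * sigma ^+ 2 / 2))%:E
    <= \int[mu]_x (W x)%:E)%E.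
Proof.
move=> Wfin.
have fin_vn : (\int[mu]_x (Z x * v^\- x)%:E)%E \is a fin_num.
  rewrite ge0_fin_numE; last by apply: integral_ge0 => x _; rewrite lee_fin mulr_ge0 ?funrneg_ge0.
  exact: le_lt_trans catoni_integral_funrneg_le (le_lt_trans catoni_integral_quadratic_le Wfin).
have Ie_le : (\int[mu]_x (Z x * expR (g (v x)))%:E
    <= \int[mu]_x (Z x)%:E + \int[mu]_x (q x * D x ^+ 2)%:E)%E.
  rewrite -(leeD2rE _ _ fin_vn); apply: le_trans catoni_integral_expansion _.
  by rewrite (integral_mul_funrposM_eq _ _ Z0 mZG ml) addeAC.
rewrite (eq_integral (fun x => (Z x * expR (g (v x)))%:E)); last first.
  by move=> x _; rewrite /Z /a /v /= expRD; congr EFin; ring.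
exact: le_trans Ie_le catoni_integral_quadratic_le.
Qed.

End catoni_step.

Lemma catoniN_catoniM (R : realType) T (phi : R -> R) (lam X : nat -> T -> R) (mu sigma : R) :
  catoniN phi lam X mu sigma =
  catoniM (fun v => - phi (- v)) (fun t x => - lam t x) X mu sigma.
Proof.
apply/funext => t; apply/funext => x; apply: eq_bigr => i _.
by rewrite mulNr opprK sqrrN.
Qed.

Lemma filtration_G_measurable {R : realType} {d} {T : measurableType d}
    {F : nat -> set (set T)} (f : T -> R) {s t : nat} :
  filtration F -> (s <= t)%N -> G_measurable (F s) f -> G_measurable (F t) f.
Proof.
move=> [_ F_nd] /subnK <- fs; elim: (t - s)%N => [|n IHn] // B mB.
by rewrite addSn; apply/F_nd/IHn.
Qed.

Section catoni_supermartingale.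
Context {R : realType} {d} {T : measurableType d} {P : probability T R}.
Context {F : nat -> set (set T)} {X lam : nat -> T -> R} {mu sigma : R} {g : R -> R}.
Hypothesis hF : filtration F.
Hypothesis mX : forall t, G_measurable (F t.+1) (X t.+1).
Hypothesis X_mean : forall t, cond_exp_version P (F t) (X t.+1) (fun _ => mu).
Hypothesis X_var : forall t, exists Y : T -> R,
  cond_exp_version P (F t) (fun x => (X t.+1 x - mu) ^+ 2) Y /\
  {ae P, forall x, Y x <= sigma ^+ 2}.
Hypothesis lam_predictable : forall t, G_measurable (F t) (lam t.+1).
Hypothesis mg : measurable_fun setT g.
Hypothesis expR_g_le : forall v, expR (g v) <= 1 + v + v ^+ 2 / 2.

Local Notation M := (catoniM g lam X mu sigma).

Lemma catoniM_ge0 t x : 0 <= M t x.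
Proof. by apply: prodr_ge0 => i _; exact: expR_ge0. Qed.

Lemma catoniMS t : M t.+1 = fun x =>
  M t x * expR (g (lam t.+1 x * (X t.+1 x - mu)) - lam t.+1 x ^+ 2 * sigma ^+ 2 / 2).
Proof. by apply/funext => x; rewrite /catoniM big_ord_recr. Qed.

Lemma catoniM_adapted : adapted F M.
Proof.
elim => [|t IHt].
  have -> : M 0 = fun=> 1 by apply/funext => x; rewrite /catoniM big_ord0.
  by apply/(G_measurableP (hF.1 0)); exact: measurable_cst.
have sG := hF.1 t.+1; have up f := filtration_G_measurable f hF (leqnSn t).
move: IHt (lam_predictable t) (mX t) => /up/(G_measurableP sG) mM /up/(G_measurableP sG) ml.
move=> /(G_measurableP sG) mXt; apply/(G_measurableP sG).
rewrite catoniMS; apply: measurable_funM => //.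
apply: measurableT_comp => //; apply: measurable_funB.
  apply: measurableT_comp => //; apply: measurable_funM; first exact: ml.
  exact: measurable_funB.
by apply: measurable_funM => //; apply: measurable_funM => //; exact: measurable_funX.
Qed.

Lemma catoniM_setI_integral_le t : (\int[P]_x (M t x)%:E < +oo)%E -> forall A, F t A ->
  (\int[P]_(x in A) (M t.+1 x)%:E <= \int[P]_(x in A) (M t x)%:E)%E.
Proof.
move=> Mfin A FA; have sG := hF.1 t; have [Y [XY Ysigma]] := X_var t.
have mD : measurable_fun setT (X t.+1 \- cst mu).
  by apply: measurable_funB => //; exact/(G_measurable_fun (hF.1 t.+1)).
have mA : measurable_fun [set: g_sigma_algebraType (F t)] (\1_A : _ -> R).
  by apply: measurable_indic; rewrite sub_measurableE.
have mM := (G_measurableP sG _).1 (catoniM_adapted t).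
have ml := (G_measurableP sG _).1 (lam_predictable t).
have W0 x : 0 <= \1_A x * M t x by rewrite mulr_ge0 ?catoniM_ge0.
have mW : measurable_fun [set: g_sigma_algebraType (F t)] ((\1_A \* M t) : _ -> R).
  exact: measurable_funM.
have Wfin : (\int[P]_x (\1_A x * M t x)%:E < +oo)%E.
  apply: le_lt_trans Mfin; apply: ge0_le_integral_EFin => //.
  - exact: sub_measurable_fun mW.
  - exact: G_measurable_fun sG _ (catoniM_adapted t).
  - by move=> x; rewrite indicE; case: (_ \in _); rewrite ?mul1r ?mul0r ?catoniM_ge0.
have := catoni_step_integral_le sG P (X t.+1 \- cst mu) sigma mD
  (cond_exp_cst_integral_funrpos sG (X_mean t))
  (cond_exp_integral_le_cst sG (sqr_ge0 sigma) XY Ysigma)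
  g (lam t.+1) (\1_A \* M t) mg expR_g_le W0 mW ml Wfin.
rewrite !(integral_mkcond_indic P A) catoniMS.
move=> step; under eq_integral do rewrite /= mulrA.
exact: step.
Qed.

Lemma catoniM_integral_le1 t : (\int[P]_x (M t x)%:E <= 1)%E.
Proof.
elim: t => [|t IHt].
  rewrite (eq_integral (cst 1%E)); last by move=> x _; rewrite /catoniM big_ord0.
  by rewrite integral_cst // mul1e; exact: probability_le1.
have FT : F t setT by rewrite -(sub_measurableE (hF.1 t)).
have Mfin := le_lt_trans IHt (ltry _).
by apply: le_trans IHt; exact: catoniM_setI_integral_le Mfin _ FT.
Qed.

Lemma catoniM_integrable t : P.-integrable setT (EFin \o M t).
Proof.
apply/integrableP; split.
  exact/measurable_EFinP/(G_measurable_fun (hF.1 t))/catoniM_adapted.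
rewrite (eq_integral (fun x => (M t x)%:E)) => [|x _].
  exact: le_lt_trans (catoniM_integral_le1 t) (ltry _).
by rewrite /comp gee0_abs // lee_fin catoniM_ge0.
Qed.

Lemma catoniM_supermartingale : supermartingale P F M.
Proof.
split; [exact: catoniM_adapted | exact: catoniM_integrable |].
move=> t Y [_ mY iY YM].
apply: (ae_le_of_sub_integral_le (hF.1 t)) => //;
  [exact: catoniM_adapted | exact: catoniM_integrable |].
move=> A FA; rewrite -YM //; apply: catoniM_setI_integral_le FA.
exact: le_lt_trans (catoniM_integral_le1 t) (ltry _).
Qed.

End catoni_supermartingale.

Theorem lemma6 (R : realType) (d : measure_display) (T : measurableType d)
  (P : probability T R) (F : nat -> set (set T)) (X lam : nat -> T -> R)
  (mu sigma : R) (phi : R -> R) :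
  filtration F ->
  (forall A, F 0%N A -> A = set0 \/ A = setT) ->
  (forall t, G_measurable (F t.+1) (X t.+1)) ->
  (forall t, cond_exp_version P (F t) (X t.+1) (fun _ => mu)) ->
  (forall t, exists Y : T -> R,
      cond_exp_version P (F t) (fun x => (X t.+1 x - mu) ^+ 2) Y /\
      {ae P, forall x, Y x <= sigma ^+ 2}) ->
  (forall t, G_measurable (F t) (lam t.+1)) ->
  catoni_type phi ->
  (forall t x, 0 <= catoniM phi lam X mu sigma t x) /\
  (forall t x, 0 <= catoniN phi lam X mu sigma t x) /\
  supermartingale P F (catoniM phi lam X mu sigma) /\
  supermartingale P F (catoniN phi lam X mu sigma).
Proof.
move=> hF _ mX X_mean X_var lam_predictable phi_catoni.
have [expR_phi_le expR_Nphi_le] := catoni_type_expR_le phi_catoni.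
have mphi : measurable_fun setT phi := nondecreasing_measurable measurableT phi_catoni.1.
have mNphi : measurable_fun setT (fun v : R => - phi (- v)).
  by apply: measurable_funN; exact: measurableT_comp.
have Nlam_predictable t : G_measurable (F t) (- lam t.+1).
  by apply/(G_measurableP (hF.1 t)); apply/measurable_funN/(G_measurableP (hF.1 t)).
rewrite catoniN_catoniM; split; [|split; [|split]].
- exact: catoniM_ge0.
- exact: catoniM_ge0.
- exact: catoniM_supermartingale hF mX X_mean X_var lam_predictable mphi expR_phi_le.
- exact: catoniM_supermartingale hF mX X_mean X_var Nlam_predictable mNphi expR_Nphi_le.
Qed.
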